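(* Let $X$ be a flag simplicial complex with vertex set $S$, let $W$ be the associated right-angled Coxeter group, and suppose that the radius of convergence of the growth series $W(t)$ equals $1$. Then $X$ is the join of a cross-polytope and a simplex.
   Context: Flag: every set of pairwise adjacent vertices is a face. The right-angled Coxeter group of $X$ is $W=\langle S\mid s^2=1\ (s\in S),\ st=ts\ (\{s,t\}\in X)\rangle$. Its growth series is $W(t)=\sum_{w\in W}t^{\ell(w)}$, where $\ell$ is word length with respect to $S$. The join of complexes on disjoint vertex sets is $\{\sigma\cup\tau:\sigma\in X,\tau\in Y\}$; a cross-polytope is the $k$-fold join of the complex with two vertices and no edge; a simplex is the complex of all subsets of a finite set. *)

From Stdlib Require Import Reals Relations ClassicalEpsilon.
From Coquelicot Require Import Coquelicot.
From mathcomp Require Import all_boot.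

Set Implicit Arguments.
Unset Strict Implicit.
Unset Printing Implicit Defensive.

Definition pdec (P : Prop) : bool :=
  if excluded_middle_informative P then true else false.

Section RACG.
Variable S : finType.

Definition simplicial_complex_on (X : {set {set S}}) : Prop :=
  set0 \in X /\
  (forall sigma tau : {set S}, tau \subset sigma -> sigma \in X -> tau \in X) /\
  (forall s : S, [set s] \in X).

Definition flag (X : {set {set S}}) : Prop :=
  forall sigma : {set S},
    (forall s t, s \in sigma -> t \in sigma -> s != t -> [set s; t] \in X) ->
    sigma \in X.

(* Elementary moves of words over S coming from the presentation
   <S | s^2 = 1, st = ts ({s,t} in X)>. *)
Inductive rstep (X : {set {set S}}) : seq S -> seq S -> Prop :=
| rstep_del (u v : seq S) (s : S) : rstep X (u ++ s :: s :: v) (u ++ v)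
| rstep_comm (u v : seq S) (s t : S) :
    [set s; t] \in X -> rstep X (u ++ s :: t :: v) (u ++ t :: s :: v).

(* Two words represent the same element of W. *)
Definition wequiv (X : {set {set S}}) : relation (seq S) :=
  clos_refl_sym_trans (seq S) (rstep X).

Definition reduced (X : {set {set S}}) (w : seq S) : Prop :=
  forall w', wequiv X w w' -> (size w <= size w')%N.

(* Number of elements of W of word length n: the number of classes of
   reduced words of length n. *)
Definition growth_coef (X : {set {set S}}) (n : nat) : nat :=
  #|[set [set v : n.-tuple S | pdec (wequiv X (val v) (val w))]
     | w in [set w : n.-tuple S | pdec (reduced X (val w))]]|.

Definition cjoin (Y Z : {set {set S}}) : {set {set S}} :=
  [set sigma :|: tau | sigma in Y, tau in Z].

Definition cverts (Y : {set {set S}}) : {set S} := \bigcup_(sigma in Y) sigma.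

Definition two_points (a b : S) : {set {set S}} := [set set0; [set a]; [set b]].

(* k-fold join of two-point complexes (k = 0 gives the empty complex {∅}). *)
Inductive cross_polytope : {set {set S}} -> Prop :=
| cross_nil : cross_polytope [set set0]
| cross_cons (Y : {set {set S}}) (a b : S) :
    a != b -> a \notin cverts Y -> b \notin cverts Y ->
    cross_polytope Y -> cross_polytope (cjoin (two_points a b) Y).

Definition simplex (V : {set S}) : {set {set S}} := powerset V.

End RACG.

(* If some vertex a is adjacent to neither of two distinct vertices b and c,
   then a |-> A, b |-> (1,0), c |-> (0,1), s |-> 1 defines a morphism from W
   onto the free product Z/2 * (Z/2)^2, which we realise as a permutation of
   its alternating normal forms. The 2^m words (a b | a c)^m have pairwise
   distinct images of length 2m, so they are reduced and pairwise distinct in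
   W, which forces the radius of convergence of W(t) below 1. Hence every
   vertex has at most one non-neighbour; the non-adjacent pairs then split the
   vertices carrying them into disjoint pairs spanning a cross-polytope, and
   flagness makes X its join with the simplex on the remaining vertices. *)
From Stdlib Require Import Reals Relations ClassicalEpsilon Lra.
From Coquelicot Require Import Coquelicot.
From mathcomp Require Import all_boot.

Set Implicit Arguments.
Unset Strict Implicit.
Unset Printing Implicit Defensive.

Local Open Scope nat_scope.

(* Letters of Z/2 * (Z/2)^2: [LA] is the generator of Z/2, [LV p q] the
   element (p, q) of (Z/2)^2, which must be nonzero in a normal form. *)
Inductive letter := LA | LV of bool & bool.

Definition headA (L : seq letter) := if L is LA :: _ then true else false.
Definition headV (L : seq letter) := if L is LV _ _ :: _ then true else false.

Fixpoint normal (L : seq letter) : bool :=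
  match L with
  | [::] => true
  | LA :: L' => ~~ headA L' && normal L'
  | LV p q :: L' => [&& p || q, ~~ headV L' & normal L']
  end.

Definition mulA (L : seq letter) :=
  if L is LA :: L' then L' else LA :: L.

Definition mulV (x y : bool) (L : seq letter) :=
  match L with
  | LV p q :: L' =>
      if xorb p x || xorb q y then LV (xorb p x) (xorb q y) :: L' else L'
  | _ => LV x y :: L
  end.

Ltac case_bools := repeat match goal with b : bool |- _ => case: b end.

Lemma normal_mulA L : normal L -> normal (mulA L).
Proof. by case: L => [|[|p q] [|[|p' q'] L]] //=; case_bools. Qed.

Lemma normal_mulV x y L : x || y -> normal L -> normal (mulV x y L).
Proof. by case: L => [|[|p q] [|[|p' q'] L]] //=; case_bools; rewrite /= ?andbT. Qed.

Lemma mulAK L : normal L -> mulA (mulA L) = L.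
Proof. by case: L => [|[|p q] [|[|p' q'] L]]. Qed.

Lemma mulVK x y L : normal L -> mulV x y (mulV x y L) = L.
Proof. by case: L => [|[|p q] [|[|p' q'] L]] //=; case_bools. Qed.

Lemma mulVC x y x' y' L : x || y -> x' || y' -> normal L ->
  mulV x y (mulV x' y' L) = mulV x' y' (mulV x y L).
Proof. by case: L => [|[|p q] [|[|p' q'] L]] //=; case_bools. Qed.

Lemma size_mulA L : size (mulA L) <= (size L).+1.
Proof. by case: L => [|[|p q] L] //=; apply: leqW. Qed.

Lemma size_mulV x y L : size (mulV x y L) <= (size L).+1.
Proof. by case: L => [|[|p q] L] //=; case: ifP => // _; apply/leqW/leqnSn. Qed.

Lemma pdecP (P : Prop) : reflect P (pdec P).
Proof. by rewrite /pdec; case: excluded_middle_informative; constructor. Qed.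

Section WordAction.

Variables (S : finType) (a b c : S).
Hypotheses (neq_ab : a != b) (neq_ac : a != c) (neq_bc : b != c).

Definition gen_act (s : S) :=
  if s == a then mulA else if s == b then mulV true false
  else if s == c then mulV false true else id.

Definition word_act (L : seq letter) (w : seq S) :=
  foldl (fun L s => gen_act s L) L w.

Definition word_nf (w : seq S) := word_act [::] w.

Lemma gen_act_a : gen_act a = mulA.
Proof. by rewrite /gen_act eqxx. Qed.

Lemma gen_act_b : gen_act b = mulV true false.
Proof. by rewrite /gen_act eq_sym (negbTE neq_ab) eqxx. Qed.

Lemma gen_act_c : gen_act c = mulV false true.
Proof. by rewrite /gen_act eq_sym (negbTE neq_ac) eq_sym (negbTE neq_bc) eqxx. Qed.

Lemma gen_act_id s : s \notin [set a; b; c] -> gen_act s = id.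
Proof.
by rewrite !inE !negb_or /gen_act => /andP [/andP [/negbTE -> /negbTE ->] /negbTE ->].
Qed.

Lemma normal_gen_act s L : normal L -> normal (gen_act s L).
Proof.
rewrite /gen_act; case: ifP => _; first exact: normal_mulA.
by case: ifP => _; [|case: ifP => _ //]; exact: normal_mulV.
Qed.

Lemma gen_actK s L : normal L -> gen_act s (gen_act s L) = L.
Proof.
rewrite /gen_act; case: ifP => _; first exact: mulAK.
by case: ifP => _; [|case: ifP => _ //]; exact: mulVK.
Qed.

Lemma size_gen_act s L : size (gen_act s L) <= (size L).+1.
Proof.
rewrite /gen_act; case: ifP => _; first exact: size_mulA.
by case: ifP => _; [|case: ifP => _ //]; exact: size_mulV.
Qed.

Lemma normal_word_act L w : normal L -> normal (word_act L w).
Proof. by elim: w L => //= s w IH L nL; apply/IH/normal_gen_act. Qed.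

Lemma size_word_act L w : size (word_act L w) <= size L + size w.
Proof.
elim: w L => [|s w IH] L /=; first by rewrite addn0.
by apply: leq_trans (IH _) _; rewrite addnS -addSn leq_add2r size_gen_act.
Qed.

Lemma word_act_cons L s w : word_act L (s :: w) = word_act (gen_act s L) w.
Proof. by []. Qed.

Lemma word_nf_cat u v : word_nf (u ++ v) = word_act (word_nf u) v.
Proof. exact: foldl_cat. Qed.

Lemma normal_word_nf w : normal (word_nf w).
Proof. exact: normal_word_act. Qed.

Fixpoint alt_word (ys : seq bool) : seq S :=
  if ys is y :: ys' then alt_word ys' ++ [:: a; if y then b else c] else [::].

Fixpoint alt_code (ys : seq bool) : seq letter :=
  if ys is y :: ys' then
    (if y then LV true false else LV false true) :: LA :: alt_code ys'
  else [::].

Lemma size_alt_word ys : size (alt_word ys) = (size ys).*2.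
Proof. by elim: ys => //= y ys IH; rewrite size_cat IH addn2. Qed.

Lemma size_alt_code ys : size (alt_code ys) = (size ys).*2.
Proof. by elim: ys => //= y ys ->. Qed.

Lemma alt_code_inj : injective alt_code.
Proof. by elim=> [|y ys IH] [|z zs] //= [] + /IH ->; case: y; case: z. Qed.

Lemma word_nf_alt_word ys : word_nf (alt_word ys) = alt_code ys.
Proof.
elim: ys => //= y ys IH.
rewrite word_nf_cat IH !word_act_cons gen_act_a.
have -> : mulA (alt_code ys) = LA :: alt_code ys by case: ys {IH} => // -[].
by case: y; rewrite ?gen_act_b ?gen_act_c.
Qed.

Variable X : {set {set S}}.
Hypotheses (nab : [set a; b] \notin X) (nac : [set a; c] \notin X).

Lemma gen_actC s t L : [set s; t] \in X -> normal L ->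
  gen_act s (gen_act t L) = gen_act t (gen_act s L).
Proof.
move=> st nL.
have [s_abc|/gen_act_id -> //] := boolP (s \in [set a; b; c]).
have [t_abc|/gen_act_id -> //] := boolP (t \in [set a; b; c]).
move: s_abc t_abc st; rewrite !inE => /orP[/orP[]|]/eqP-> /orP[/orP[]|]/eqP-> st //;
  first [by rewrite gen_act_b gen_act_c mulVC
        | by move: st; rewrite ?(setUC [set b]) ?(setUC [set c]) (negbTE nab)
        | by move: st; rewrite ?(setUC [set c]) (negbTE nac)].
Qed.

Lemma word_nf_wequiv w w' : wequiv X w w' -> word_nf w = word_nf w'.
Proof.
elim=> {w w'} [w w' []||w w' _ ->|w1 w2 w3 _ -> _ ->] //.
- by move=> u v s; rewrite !word_nf_cat !word_act_cons gen_actK ?normal_word_nf.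
- by move=> u v s t st; rewrite !word_nf_cat !word_act_cons (gen_actC st) ?normal_word_nf.
Qed.

Lemma size_word_nf w : size (word_nf w) <= size w.
Proof. exact: size_word_act. Qed.

Lemma alt_word_wequiv ys zs : wequiv X (alt_word ys) (alt_word zs) -> ys = zs.
Proof. by move/word_nf_wequiv; rewrite !word_nf_alt_word => /alt_code_inj. Qed.

Lemma reduced_alt_word ys : reduced X (alt_word ys).
Proof.
move=> w /word_nf_wequiv eq_nf; rewrite size_alt_word -size_alt_code.
by rewrite -word_nf_alt_word eq_nf size_word_nf.
Qed.

Lemma growth_coef_double_ge m : 2 ^ m <= growth_coef X m.*2.
Proof.
have size_word (ys : m.-tuple bool) : size (alt_word ys) == m.*2.
  by rewrite size_alt_word size_tuple.
pose word ys := Tuple (size_word ys).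
pose class (w : (m.*2).-tuple S) := [set v : (m.*2).-tuple S | pdec (wequiv X v w)].
have class_word_inj : injective (class \o word).
  move=> ys zs /= eq_class; apply/val_inj/alt_word_wequiv.
  have : word ys \in class (word zs) by rewrite -eq_class inE; apply/pdecP/rst_refl.
  by rewrite inE => /pdecP.
rewrite -card_bool -card_tuple -cardsT -(card_imset _ class_word_inj).
apply/subset_leq_card/subsetP => _ /imsetP [ys _ ->].
by apply/imsetP; exists (word ys); rewrite // inE; apply/pdecP/reduced_alt_word.
Qed.

End WordAction.

Lemma INR_expn m n : INR (m ^ n) = pow (INR m) n.
Proof. by elim: n => //= n IH; rewrite expnS mult_INR IH. Qed.

Section Radius.

Local Open Scope R_scope.

Lemma CV_radius_lt1_of_even_ge_pow2 (u : nat -> R) :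
  (forall m, 2 ^ m <= u m.*2) -> Rbar_lt (CV_radius u) 1.
Proof.
move=> u_ge; apply: Rbar_not_le_lt => radius_ge1.
have : Rbar_lt (Rabs (3 / 4)) (CV_radius u).
  by apply: Rbar_lt_le_trans radius_ge1; rewrite /= Rabs_pos_eq; lra.
move/CV_radius_inside/ex_series_lim_0/is_lim_seq_Reals/(_ 1 Rlt_0_1) => [N small].
have le_N : (N <= N.*2)%N by rewrite -addnn leq_addr.
have := small N.*2 (leP le_N).
rewrite /R_dist Rminus_0_r /scal /= /mult /= pow_n_pow.
(* (3/4)^(2N) 2^N = (9/8)^N *)
have : 1 <= (3 / 4) ^ N.*2 * u N.*2.
  apply: Rle_trans (Rmult_le_compat_l _ _ _ (pow_le _ _ _) (u_ge N)); last lra.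
  by rewrite -mul2n pow_mult -Rpow_mult_distr; apply: pow_R1_Rle; lra.
by move: (Rle_abs ((3 / 4) ^ N.*2 * u N.*2)); lra.
Qed.

End Radius.

Lemma CV_radius_growth_lt1 (S : finType) (X : {set {set S}}) (a b c : S) :
  (forall s : S, [set s] \in X) -> b != c ->
  [set a; b] \notin X -> [set a; c] \notin X ->
  Rbar_lt (CV_radius (fun n => INR (growth_coef X n))) (Rbar.Finite (IZR 1)).
Proof.
move=> X_vertex neq_bc nab nac.
have neq_ab : a != b by apply: contraNneq nab => <-; rewrite setUid.
have neq_ac : a != c by apply: contraNneq nac => <-; rewrite setUid.
apply: CV_radius_lt1_of_even_ge_pow2 => m.
rewrite -[IZR 2]/(INR 2) -INR_expn; apply/le_INR/leP.
exact: (growth_coef_double_ge neq_ab neq_ac neq_bc nab nac m).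
Qed.

Lemma setI1_if (T : finType) (A : {set T}) (x : T) :
  A :&: [set x] = if x \in A then [set x] else set0.
Proof.
apply/setP => y; rewrite !inE; case: eqVneq => [->|].
  by case: ifP; rewrite !inE ?eqxx.
by case: ifP; rewrite !inE ?andbF => // _ /negbTE ->.
Qed.

Section TwoPoints.

Variables (S : finType) (a b : S).

Lemma two_points_sub (rho : {set S}) :
  rho \in two_points a b -> rho \subset [set a; b].
Proof.
by rewrite !inE => /orP [/orP [] | ] /eqP ->; rewrite ?sub0set // sub1set !inE eqxx ?orbT.
Qed.

Lemma two_points_eq (rho : {set S}) s t :
  rho \in two_points a b -> s \in rho -> t \in rho -> s = t.
Proof.
by rewrite !inE => /orP [/orP [] | ] /eqP ->; rewrite ?inE // => /eqP -> /eqP ->.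
Qed.

Lemma mem_two_points (rho : {set S}) :
  rho \subset [set a; b] -> ~~ ([set a; b] \subset rho) -> rho \in two_points a b.
Proof.
move=> rho_ab; rewrite -(setIidPl rho_ab) setIUr !setI1_if subUset !sub1set.
by case: (a \in rho); case: (b \in rho); rewrite ?set0U ?setU0 !inE ?eqxx ?orbT.
Qed.

End TwoPoints.

Definition induced (S : finType) (X : {set {set S}}) (D : {set S}) :=
  [set sigma in X | sigma \subset D].

Lemma cverts_induced (S : finType) (X : {set {set S}}) D :
  cverts (induced X D) \subset D.
Proof.
by apply/subsetP => x /bigcupP [sigma]; rewrite inE => /andP [_ /subsetP]; apply.
Qed.

Section FlagComplex.

Variables (S : finType) (X : {set {set S}}).
Hypotheses (X_complex : simplicial_complex_on X) (X_flag : flag X).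

Lemma face0 : set0 \in X.
Proof. by case: X_complex. Qed.

Lemma face_sub (sigma tau : {set S}) : tau \subset sigma -> sigma \in X -> tau \in X.
Proof. by case: X_complex => _ [sub _]; apply: sub. Qed.

Lemma face_pair_neq s t : [set s; t] \notin X -> s != t.
Proof. by case: X_complex => _ [_ X_vertex]; apply: contraNneq => ->; rewrite setUid. Qed.

Lemma flag_setU (sigma rho : {set S}) : sigma \in X ->
  (forall s t, s \in rho -> t \in sigma :|: rho -> s != t -> [set s; t] \in X) ->
  sigma :|: rho \in X.
Proof.
move=> sigma_X rho_adj; apply: X_flag => s t.
case s_rho: (s \in rho); first by move=> _; apply: rho_adj.
case t_rho: (t \in rho).
  by move=> s_in _ neq_st; rewrite setUC; apply: rho_adj; rewrite // eq_sym.
rewrite !inE s_rho t_rho !orbF => s_sigma t_sigma _.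
by apply: face_sub sigma_X; rewrite subUset !sub1set s_sigma.
Qed.

Lemma induced0 : induced X set0 = [set set0].
Proof.
by apply/setP => sigma; rewrite !inE subset0 andb_idl // => /eqP ->; apply: face0.
Qed.

Lemma induced_split (D : {set S}) (a b : S) :
  [set a; b] \subset D -> [set a; b] \notin X ->
  (forall s t, s \in [set a; b] -> t \in D :\: [set a; b] -> [set s; t] \in X) ->
  induced X D = cjoin (two_points a b) (induced X (D :\: [set a; b])).
Proof.
move=> ab_D nab ab_adj; apply/setP => sigma; apply/idP/imset2P => [|[rho tau]].
- rewrite inE => /andP [sigma_X sigma_D].
  exists (sigma :&: [set a; b]) (sigma :\: [set a; b]); last by rewrite setID.
  + apply: mem_two_points; first exact: subsetIr.
    apply: contra nab => ab_sigma; apply: face_sub sigma_X.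
    exact: subset_trans ab_sigma (subsetIl _ _).
  + by rewrite inE (face_sub (subsetDl _ _) sigma_X) setSD.
- move=> rho_ab; rewrite inE => /andP [tau_X tau_D] ->.
  have rho_sub := two_points_sub rho_ab.
  rewrite inE subUset (subset_trans rho_sub ab_D).
  rewrite (subset_trans tau_D (subsetDl _ _)) !andbT.
  rewrite setUC; apply: flag_setU tau_X _ => s t s_rho /setUP [t_tau|t_rho] neq_st.
  + exact: ab_adj (subsetP rho_sub s s_rho) (subsetP tau_D t t_tau).
  + by rewrite (two_points_eq rho_ab s_rho t_rho) eqxx in neq_st.
Qed.

Lemma join_cone_points (P : {set S}) :
  (forall s t, s \notin P -> [set s; t] \in X) ->
  X = cjoin (induced X P) (simplex (~: P)).
Proof.
move=> cone; apply/setP => sigma; apply/idP/imset2P => [sigma_X|[tau rho]].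
- exists (sigma :&: P) (sigma :\: P); last by rewrite setID.
  + by rewrite inE subsetIr (face_sub (subsetIl _ _) sigma_X).
  + by rewrite /simplex powersetE setDE subsetIr.
- rewrite inE /simplex powersetE => /andP [tau_X _] rho_P ->.
  apply: flag_setU tau_X _ => s t s_rho _ _.
  by apply: cone; rewrite -in_setC (subsetP rho_P).
Qed.

Hypothesis nonadj_unique :
  forall s t u, [set s; t] \notin X -> [set s; u] \notin X -> t = u.

Lemma nonadj_sym s t : [set s; t] \notin X -> [set t; s] \notin X.
Proof. by rewrite setUC. Qed.

Lemma nonadj_mem_pair a b s t : [set a; b] \notin X -> [set s; t] \notin X ->
  (s \in [set a; b]) = (t \in [set a; b]).
Proof.
move=> nab.
have partner u v : [set u; v] \notin X -> u \in [set a; b] -> v \in [set a; b].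
  move=> nuv; rewrite !inE => /orP [] /eqP eq_u; subst u.
  - by rewrite (nonadj_unique nuv nab) eqxx orbT.
  - by rewrite (nonadj_unique nuv (nonadj_sym nab)) eqxx.
by move=> nst; apply/idP/idP; apply: partner; rewrite // nonadj_sym.
Qed.

Lemma cross_polytope_induced (D : {set S}) :
  (forall s, s \in D -> exists t, [set s; t] \notin X) ->
  (forall s t, s \in D -> [set s; t] \notin X -> t \in D) ->
  cross_polytope (induced X D).
Proof.
elim: {D}_.+1 {-2}D (ltnSn #|D|) => // n IH D lt_D D_nonadj D_closed.
have [->|[a a_D]] := set_0Vmem D; first by rewrite induced0; apply: cross_nil.
have [b nab] := D_nonadj a a_D.
have b_D := D_closed a b a_D nab.
have ab_D : [set a; b] \subset D by rewrite subUset !sub1set a_D.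
pose D' := D :\: [set a; b].
have pair_D' s : s \in D' = (s \notin [set a; b]) && (s \in D) by rewrite inE.
rewrite (induced_split ab_D nab); last first.
  move=> s t s_ab; rewrite pair_D' => /andP [t_ab _]; apply: contraR t_ab => nst.
  by rewrite -(nonadj_mem_pair nab nst).
apply: cross_cons; first exact: face_pair_neq nab.
- by apply/negP => /(subsetP (cverts_induced X D')); rewrite pair_D' !inE eqxx.
- by apply/negP => /(subsetP (cverts_induced X D')); rewrite pair_D' !inE eqxx orbT.
apply: IH => [|s|s t].
- suff /proper_card lt_D' : D' \proper D by exact: leq_trans lt_D' lt_D.
  rewrite properE subsetDl /=.
  by apply/subsetPn; exists a; rewrite // pair_D' !inE eqxx.
- by rewrite pair_D' => /andP [_ /D_nonadj].
- rewrite !pair_D' => /andP [s_ab s_D] nst.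
  by rewrite -(nonadj_mem_pair nab nst) s_ab (D_closed s t s_D nst).
Qed.

Lemma join_structure : exists (Y : {set {set S}}) (V : {set S}),
  cross_polytope Y /\ [disjoint cverts Y & V] /\ X = cjoin Y (simplex V).
Proof.
pose P := [set s | [exists t, [set s; t] \notin X]].
exists (induced X P), (~: P); split; [|split].
- apply: cross_polytope_induced => [s|s t _ nst].
    by rewrite inE => /existsP.
  by rewrite inE; apply/existsP; exists s; rewrite nonadj_sym.
- by rewrite disjoints_subset setCK cverts_induced.
- apply: join_cone_points => s t; rewrite inE negb_exists => /forallP.
  by move/(_ t); rewrite negbK.
Qed.

End FlagComplex.

Theorem proposition3p4p5 (S : finType) (X : {set {set S}}) :
  simplicial_complex_on X -> flag X ->
  CV_radius (fun n => INR (growth_coef X n)) = Rbar.Finite (IZR 1) ->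
  exists (Y : {set {set S}}) (V : {set S}),
    cross_polytope Y /\ [disjoint cverts Y & V] /\ X = cjoin Y (simplex V).
Proof.
move=> X_complex X_flag radius1.
have [|no_two] := boolP [exists a, exists b, exists c,
  [&& b != c, [set a; b] \notin X & [set a; c] \notin X]].
  case/existsP => a /existsP [b /existsP [c /and3P [neq_bc nab nac]]].
  have [_ [_ X_vertex]] := X_complex.
  have := CV_radius_growth_lt1 X_vertex neq_bc nab nac.
  by rewrite radius1 => /Rlt_irrefl.
apply: join_structure => // s t u nst nsu; apply/eqP.
apply: contraNT no_two => neq_tu; apply/existsP; exists s.
by apply/existsP; exists t; apply/existsP; exists u; rewrite neq_tu nst nsu.
Qed.
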